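(* Assume the setting below with general missingness: the $M_i(1),M_i(0)\in\{0,1\}$ are arbitrary constants whose values may depend on the potential outcomes in an arbitrary way. Fix $\boldsymbol\delta=(\delta_1,\dots,\delta_n)^\intercal\in\mathbb R^n$ and define $\boldsymbol Y^{\texttt{g}}_{\boldsymbol Z,\boldsymbol\delta}(0)\in\overline{\mathbb R}^n$ by $$Y^{\texttt{g}}_{\boldsymbol Z,\boldsymbol\delta,i}(0)=\begin{cases}Y_i-\delta_i,& Z_i=1,\ M_i=1,\\ -\infty,& Z_i=1,\ M_i=0,\\ Y_i,& Z_i=0,\ M_i=1,\\ +\infty,& Z_i=0,\ M_i=0,\end{cases}\qquad 1\le i\le n.$$ Then $p^{\texttt{g}}_{\boldsymbol Z,\boldsymbol\delta}:=G_{\mathrm R,\phi}\big(t_{\mathrm R,\phi}(\boldsymbol Z,\boldsymbol Y^{\texttt{g}}_{\boldsymbol Z,\boldsymbol\delta}(0))\big)$ is a valid p-value for the sharp null $H_{\boldsymbol\delta}:\boldsymbol\tau=\boldsymbol\delta$; that is, if $H_{\boldsymbol\delta}$ holds then $\mathbb P(p^{\texttt{g}}_{\boldsymbol Z,\boldsymbol\delta}\le\alpha)\le\alpha$ for every $\alpha\in(0,1)$.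
   Context: There are $n$ units. Unit $i$ has fixed potential outcomes $Y_i^\star(0),Y_i^\star(1)\in\mathbb R$ and fixed potential missingness indicators $M_i(0),M_i(1)\in\{0,1\}$; $\tau_i=Y_i^\star(1)-Y_i^\star(0)$ and $\boldsymbol\tau=(\tau_1,\dots,\tau_n)^\intercal$. The assignment $\boldsymbol Z=(Z_1,\dots,Z_n)^\intercal$ is drawn from a completely randomized experiment (CRE): for fixed positive integers $n_1,n_0$ with $n_1+n_0=n$, $\boldsymbol Z$ is uniform over the $\binom{n}{n_1}$ vectors in $\{0,1\}^n$ with exactly $n_1$ ones, independently of all potential outcomes and potential missingness indicators; probabilities are over $\boldsymbol Z$. The observed missingness indicator is $M_i=Z_iM_i(1)+(1-Z_i)M_i(0)$. The realized outcome $Z_iY_i^\star(1)+(1-Z_i)Y_i^\star(0)$ is observed, and denoted $Y_i$, only when $M_i=1$. Test statistics: let $\overline{\mathbb R}=\mathbb R\cup\{\pm\infty\}$. For $1\le i,j\le n$ and $y,y'\in\overline{\mathbb R}$ let $\psi_{i,j}(y,y')=\mathbf 1\{y>y'\}+\mathbf 1\{y=y'\}\mathbf 1\{i\ge j\}$, and for $\boldsymbol y\in\overline{\mathbb R}^n$ let $\mathrm{rank}_i(\boldsymbol y)=\sum_{j=1}^n\psi_{i,j}(y_i,y_j)$. Let $\phi$ be a fixed nondecreasing real function on the nonnegative integers. For $\boldsymbol z\in\{0,1\}^n$, $\boldsymbol y\in\overline{\mathbb R}^n$, $t_{\mathrm R,\phi}(\boldsymbol z,\boldsymbol y)$ denotes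 either the rank-sum statistic $\sum_{i=1}^n z_i\phi(\mathrm{rank}_i(\boldsymbol y))$ or the Mann–Whitney-type statistic $\sum_{i=1}^n z_i\phi\big(\sum_{j=1}^n(1-z_j)\psi_{i,j}(y_i,y_j)\big)$; the result holds for either choice. $G_{\mathrm R,\phi}(c)=\mathbb P(t_{\mathrm R,\phi}(\boldsymbol A,\boldsymbol y_0)\ge c)$, where $\boldsymbol A$ is drawn from the CRE and $\boldsymbol y_0\in\mathbb R^n$ is any fixed vector (this does not depend on $\boldsymbol y_0$). *)

From HB Require Import structures.
From mathcomp Require Import all_boot all_order all_algebra.
From mathcomp Require Import reals constructive_ereal.
Set Implicit Arguments. Unset Strict Implicit. Unset Printing Implicit Defensive.
Import Order.TTheory GRing.Theory Num.Theory.
Local Open Scope ring_scope.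

Section Defs.
Variable R : realType.
Variable n : nat.

(* An assignment Z is represented by the set of treated units {i | Z_i = 1}. *)

(* Probability of the event E under the CRE with n1 treated units:
   uniform over the 'C(n, n1) subsets of 'I_n of size n1. *)
Definition cre_prob (n1 : nat) (E : pred {set 'I_n}) : R :=
  (#|[set A : {set 'I_n} | (#|A| == n1) && E A]|%:R) / ('C(n, n1)%:R).

Definition psi (i j : 'I_n) (y y' : \bar R) : nat :=
  ((y' < y)%E : nat) + (((y == y') && (j <= i)%N) : nat).

Definition rank (y : 'I_n -> \bar R) (i : 'I_n) : nat :=
  \sum_(j < n) psi i j (y i) (y j).

(* The statistic t_{R,phi}: if mw = false it is the rank-sum statistic,
   if mw = true it is the Mann--Whitney-type statistic. *)
Definition t_stat (mw : bool) (phi : nat -> R) (z : {set 'I_n})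
    (y : 'I_n -> \bar R) : R :=
  if mw then
    \sum_(i < n | i \in z) phi (\sum_(j < n | j \notin z) psi i j (y i) (y j))
  else \sum_(i < n | i \in z) phi (rank y i).

Definition G_stat (mw : bool) (phi : nat -> R) (n1 : nat) (y0 : 'I_n -> R)
    (c : R) : R :=
  cre_prob n1 (fun A => c <= t_stat mw phi A (fun i => (y0 i)%:E)).

Definition Yg0 (Y1 Y0 : 'I_n -> R) (M1 M0 : 'I_n -> bool) (delta : 'I_n -> R)
    (z : {set 'I_n}) (i : 'I_n) : \bar R :=
  if i \in z then (if M1 i then (Y1 i - delta i)%:E else -oo%E)
  else (if M0 i then (Y0 i)%:E else +oo%E).

Definition pval_g (mw : bool) (phi : nat -> R) (n1 : nat) (y0 : 'I_n -> R)
    (Y1 Y0 : 'I_n -> R) (M1 M0 : 'I_n -> bool) (delta : 'I_n -> R)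
    (z : {set 'I_n}) : R :=
  G_stat mw phi n1 y0 (t_stat mw phi z (Yg0 Y1 Y0 M1 M0 delta z)).

End Defs.

From HB Require Import structures.
From mathcomp Require Import all_boot all_order all_algebra all_fingroup.
From mathcomp Require Import reals constructive_ereal.
Import Order.TTheory GRing.Theory Num.Theory.
Set Implicit Arguments. Unset Strict Implicit. Unset Printing Implicit Defensive.
Local Open Scope ring_scope.

(* Under the sharp null, Y^g_Z(0) lies below the true control outcomes Y(0)
   on treated units and above them on control units.  Both statistics can only
   decrease under such a change (for the rank-sum statistic, Abel summation
   reduces this to counting treated units above each rank threshold), so
   p^g_Z >= G(t(Z, Y(0))).  Since ties are broken by index, ranks form a
   permutation of 1..n, so t(Z, Y(0)) = t(sZ, y0) for a fixed permutation s
   of the units; sZ is again uniformly distributed, and G(t(sZ, y0)) is an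
   exact randomization p-value. *)

Section KeyRank.
Variables (n : nat) (disp : Order.disp_t) (T : orderType disp).
Variable key : 'I_n -> T.

Definition key_rank (i : 'I_n) : nat := #|[set j | (key j <= key i)%O]|.

Lemma key_rank_gt0 i : (0 < key_rank i)%N.
Proof. by apply/card_gt0P; exists i; rewrite inE. Qed.

Lemma key_rank_leq i : (key_rank i <= n)%N.
Proof. by rewrite -[n in (_ <= n)%N]card_ord max_card. Qed.

Lemma leq_key_rank i j : (key_rank i <= key_rank j)%N = (key i <= key j)%O.
Proof.
have [le_ij | lt_ji] := leP (key i) (key j).
  apply/subset_leq_card/subsetP => k; rewrite !inE => /le_trans; exact.
apply/negbTE; rewrite -ltnNge; apply/proper_card/properP; split.
  apply/subsetP => k; rewrite !inE => /le_trans; apply; exact: ltW.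
by exists i; rewrite !inE ?lexx // leNgt lt_ji.
Qed.

Hypothesis key_inj : injective key.

Lemma key_rank_inj : injective key_rank.
Proof.
move=> i j eq_ij; apply: key_inj; apply/le_anti.
by rewrite -!leq_key_rank eq_ij leqnn.
Qed.

Fact rank_index_subproof i : ((key_rank i).-1 < n)%N.
Proof. by rewrite prednK ?key_rank_leq ?key_rank_gt0. Qed.

Definition rank_index i : 'I_n := Ordinal (rank_index_subproof i).

Lemma rank_index_inj : injective rank_index.
Proof.
move=> i j /(congr1 val) /= eq_ij; apply: key_rank_inj.
by rewrite -[key_rank i]prednK ?eq_ij ?prednK ?key_rank_gt0.
Qed.

Definition rank_perm : {perm 'I_n} := perm rank_index_inj.

Lemma rank_permE i : key_rank i = (rank_perm i).+1.
Proof. by rewrite permE /= prednK ?key_rank_gt0. Qed.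

Lemma leq_rank_perm i j : (rank_perm i <= rank_perm j)%N = (key i <= key j)%O.
Proof. by rewrite -leq_key_rank !rank_permE. Qed.

Lemma card_key_rank_gt m :
  #|[set i | (m < key_rank i)%N]| = #|[set s : 'I_n | (m <= s)%N]|.
Proof.
rewrite -[RHS](card_preimset _ (@perm_inj _ rank_perm)); apply: eq_card => i.
by rewrite !inE rank_permE.
Qed.

End KeyRank.

Section KeyRankComparison.
Variables (n : nat) (disp : Order.disp_t) (T : orderType disp).
Variables (ka kb : 'I_n -> T) (z : {set 'I_n}).
Hypotheses (ka_inj : injective ka) (kb_inj : injective kb).
Hypothesis cross_mono : forall i j, i \in z -> j \notin z ->
  (ka j <= ka i)%O -> (kb j <= kb i)%O.

(* The upper sets of ranks have the same size for both keys.  If some i in z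
   leaves the upper set when passing from ka to kb, every j outside z that is
   above i for kb is also above i for ka, so no unit outside z enters it. *)
Lemma card_key_rank_gt_mono m :
  (#|[set i in z | (m < key_rank ka i)%N]|
     <= #|[set i in z | (m < key_rank kb i)%N]|)%N.
Proof.
pose Ua := [set i | (m < key_rank ka i)%N].
pose Ub := [set i | (m < key_rank kb i)%N].
have -> : [set i in z | (m < key_rank ka i)%N] = Ua :&: z.
  by apply/setP => i; rewrite !inE andbC.
have -> : [set i in z | (m < key_rank kb i)%N] = Ub :&: z.
  by apply/setP => i; rewrite !inE andbC.
have [sub_ab | /subsetPn[i]] := boolP (Ua :&: z \subset Ub).
  by apply/subset_leq_card; rewrite subsetI sub_ab subsetIr.
rewrite !inE -leqNgt => /andP[ia iz] ib.
have sub_ba : Ub :\: z \subset Ua :\: z.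
  apply/subsetP => j; rewrite !inE => /andP[jz jb]; rewrite jz /=.
  have not_kb : ~~ (kb j <= kb i)%O.
    by rewrite -leq_key_rank -ltnNge (leq_ltn_trans ib jb).
  have /ltW : (ka i < ka j)%O.
    by rewrite ltNge; apply: contra not_kb; exact: cross_mono.
  by rewrite -leq_key_rank; exact: leq_trans.
have card_eq : #|Ua| = #|Ub| by rewrite !card_key_rank_gt.
rewrite -(leq_add2r #|Ua :\: z|) (cardsID z Ua) card_eq -(cardsID z Ub).
by rewrite leq_add2l subset_leq_card.
Qed.

End KeyRankComparison.

Lemma sum_tail_counts (V : zmodType) (phi : nat -> V) (n : nat) (I : finType)
    (A : {pred I}) (f : I -> nat) : (forall i, (f i <= n)%N) ->
  \sum_(i in A) phi (f i) = phi 0%N *+ #|A| +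
    \sum_(m < n) (phi m.+1 - phi m) *+ #|[set i in A | (m < f i)%N]|.
Proof.
move=> f_le; have telescope i :
    phi (f i) = phi 0%N + \sum_(m < n | (m < f i)%N) (phi m.+1 - phi m).
  rewrite -(big_ord_widen _ (fun m => phi m.+1 - phi m) (f_le i)).
  rewrite -(big_mkord xpredT (fun k => phi k.+1 - phi k)) telescope_sumr //.
  by rewrite addrC subrK.
rewrite (eq_bigr _ (fun i _ => telescope i)) big_split sumr_const /=.
congr (_ + _); rewrite (exchange_big_dep xpredT) //=; apply: eq_bigr => m _.
by rewrite -sumr_const; apply: eq_bigl => i; rewrite !inE.
Qed.

Lemma ler_sum_tail_counts (R : numDomainType) (phi : nat -> R)
    (phi_mono : {homo phi : a b / (a <= b)%N >-> a <= b})
    (n : nat) (I : finType) (A : {pred I}) (f g : I -> nat) :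
    (forall i, (f i <= n)%N) -> (forall i, (g i <= n)%N) ->
    (forall m, #|[set i in A | (m < f i)%N]|
                 <= #|[set i in A | (m < g i)%N]|)%N ->
  \sum_(i in A) phi (f i) <= \sum_(i in A) phi (g i).
Proof.
move=> f_le g_le tails.
rewrite (sum_tail_counts phi _ f_le) (sum_tail_counts phi _ g_le) lerD2l.
apply: ler_sum => m _; apply: ler_wpMn2l (tails m).
by rewrite subr_ge0 phi_mono.
Qed.

Section RankStatistics.
Variables (R : realType) (n : nat).
Implicit Types (y a b : 'I_n -> \bar R) (phi : nat -> R).

Definition tie_key y (i : 'I_n) : \bar R *l nat := (y i, val i).

Lemma tie_key_inj y : injective (tie_key y).
Proof. by move=> i j [_ /val_inj]. Qed.

Lemma psi_tie_key y i j : psi i j (y i) (y j) = (tie_key y j <= tie_key y i)%O.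
Proof. by rewrite /psi lexi_pair /=; case: ltgtP. Qed.

Lemma rank_tie_key y i : rank y i = key_rank (tie_key y) i.
Proof.
rewrite /rank /key_rank -sum1_card [RHS]big_mkcond /=; apply: eq_bigr => j _.
by rewrite psi_tie_key inE; case: leP.
Qed.

Lemma tie_key_le_mono a b i j : (a i <= b i)%E -> (b j <= a j)%E ->
  (tie_key a j <= tie_key a i)%O -> (tie_key b j <= tie_key b i)%O.
Proof.
rewrite !lexi_pair /= => le_i le_j /andP[le_a tie_a].
have le_b : (b j <= b i)%E by rewrite (le_trans le_j) // (le_trans le_a).
rewrite le_b /=; apply/implyP => ge_b; apply: (implyP tie_a).
by rewrite (le_trans le_i) // (le_trans ge_b).
Qed.

Lemma le_t_stat mw phi (phi_mono : {homo phi : a b / (a <= b)%N >-> a <= b})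
    (z : {set 'I_n}) a b :
    (forall i, i \in z -> (a i <= b i)%E) ->
    (forall j, j \notin z -> (b j <= a j)%E) ->
  t_stat mw phi z a <= t_stat mw phi z b.
Proof.
move=> le_treated ge_control.
have cross i j : i \in z -> j \notin z ->
    (tie_key a j <= tie_key a i)%O -> (tie_key b j <= tie_key b i)%O.
  move=> iz jz; apply: tie_key_le_mono.
  - exact: le_treated.
  - exact: ge_control.
rewrite /t_stat; case: mw.
  apply: ler_sum => i iz; apply/phi_mono/leq_sum => j jz.
  rewrite !psi_tie_key; move: (cross i j iz jz).
  by do 2!case: (_ <= _)%O => //; apply.
under eq_bigr do rewrite rank_tie_key.
under [X in _ <= X]eq_bigr do rewrite rank_tie_key.
apply: ler_sum_tail_counts => // [i|i|m]; try exact: key_rank_leq.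
exact: card_key_rank_gt_mono (@tie_key_inj a) (@tie_key_inj b) cross m.
Qed.

Definition tie_perm y : {perm 'I_n} := rank_perm (@tie_key_inj y).

Lemma tie_permE y i : rank y i = (tie_perm y i).+1.
Proof. by rewrite rank_tie_key; exact: rank_permE. Qed.

Definition ranked_stat mw phi (S : {set 'I_n}) : R :=
  if mw then \sum_(s in S) phi #|[set s' | (s' \notin S) && (s' <= s)%N]|
  else \sum_(s in S) phi s.+1.

Lemma t_stat_ranked mw phi A y :
  t_stat mw phi A y = ranked_stat mw phi (tie_perm y @: A).
Proof.
have inj_A : {in A &, injective (tie_perm y)}.
  by move=> ? ? _ _; exact: perm_inj.
rewrite /t_stat /ranked_stat.
case: mw; rewrite big_imset //=; apply: eq_bigr => i _.
  congr phi; rewrite -(card_preimset _ (@perm_inj _ (tie_perm y))).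
  rewrite -sum1_card [RHS]big_mkcond [LHS]big_mkcond /=; apply: eq_bigr => j _.
  rewrite !inE (mem_imset _ _ (@perm_inj _ _)) /tie_perm leq_rank_perm psi_tie_key.
  by case: (j \in A) => //=; case: (_ <= _)%O.
by rewrite tie_permE.
Qed.

Lemma t_stat_relabel mw phi A y y' :
  t_stat mw phi A y = t_stat mw phi ((tie_perm y * (tie_perm y')^-1)%g @: A) y'.
Proof.
rewrite !t_stat_ranked -imset_comp; congr ranked_stat; apply: eq_imset => i /=.
by rewrite permM permKV.
Qed.

End RankStatistics.

Section CompletelyRandomizedExperiment.
Variables (R : realType) (n n1 : nat).
Implicit Types (E F : pred {set 'I_n}).

Lemma cre_prob_le E F : (forall A : {set 'I_n}, #|A| = n1 -> E A -> F A) ->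
  cre_prob R n1 E <= cre_prob R n1 F.
Proof.
move=> EF; rewrite /cre_prob ler_wpM2r ?invr_ge0 ?ler0n // ler_nat.
apply/subset_leq_card/subsetP => A; rewrite !inE => /andP[/eqP cardA EA].
by rewrite cardA eqxx EF.
Qed.

Lemma cre_prob_perm (s : {perm 'I_n}) E :
  cre_prob R n1 (fun A => E (s @: A)) = cre_prob R n1 E.
Proof.
have s_inj : injective (fun A : {set 'I_n} => s @: A).
  exact/imset_inj/perm_inj.
rewrite /cre_prob -[in RHS](card_preimset _ s_inj); congr (_%:R / _).
by apply: eq_card => A; rewrite !inE card_imset //; exact: perm_inj.
Qed.

(* Every assignment in the rejection region has a statistic at least the
   smallest one in it, whose p-value is at most alpha. *)
Lemma cre_prob_pvalue_le (T : {set 'I_n} -> R) alpha : 0 <= alpha ->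
  cre_prob R n1 (fun w => cre_prob R n1 (fun A => T w <= T A) <= alpha) <= alpha.
Proof.
move=> alpha_ge0.
pose S := [set w : {set 'I_n} |
  (#|w| == n1) && (cre_prob R n1 (fun A => T w <= T A) <= alpha)].
have [S0 | [w1 w1S]] := set_0Vmem S.
  rewrite /cre_prob (_ : #|_| = 0%N) ?mul0r //.
  by apply/eqP; rewrite cards_eq0 -/S S0.
have [w0 w0S w0_min] := arg_minP T w1S.
have : w0 \in S := w0S; rewrite inE => /andP[_ pw0_le]; apply: le_trans pw0_le.
apply: cre_prob_le => A cardA pA_le.
have AS : A \in S by rewrite inE cardA eqxx.
exact: w0_min AS.
Qed.

End CompletelyRandomizedExperiment.

Section Imputation.
Variables (R : realType) (n : nat).
Variables (Y1 Y0 : 'I_n -> R) (M1 M0 : 'I_n -> bool) (delta : 'I_n -> R).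
Hypothesis sharp_null : forall i, Y1 i - Y0 i = delta i.

Lemma Yg0_treated_le (z : {set 'I_n}) i :
  i \in z -> (Yg0 Y1 Y0 M1 M0 delta z i <= (Y0 i)%:E)%E.
Proof.
move=> iz; rewrite /Yg0 iz; case: (M1 i); last exact: leNye.
by rewrite -sharp_null opprB addrCA subrr addr0.
Qed.

Lemma Yg0_control_ge (z : {set 'I_n}) j :
  j \notin z -> ((Y0 j)%:E <= Yg0 Y1 Y0 M1 M0 delta z j)%E.
Proof.
by move=> jz; rewrite /Yg0 (negbTE jz); case: (M0 j); [exact: lexx | exact: leey].
Qed.

End Imputation.

Theorem theorem1 (R : realType) (n n1 n0 : nat)
  (hn1 : (0 < n1)%N) (hn0 : (0 < n0)%N) (hn : (n1 + n0)%N = n)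
  (mw : bool) (phi : nat -> R)
  (phi_mono : {homo phi : a b / (a <= b)%N >-> a <= b})
  (y0 : 'I_n -> R)
  (Y1 Y0 : 'I_n -> R) (M1 M0 : 'I_n -> bool) (delta : 'I_n -> R)
  (H0 : forall i, Y1 i - Y0 i = delta i)
  (alpha : R) (ha0 : 0 < alpha) (ha1 : alpha < 1) :
  cre_prob R n1
    (fun z => pval_g mw phi n1 y0 Y1 Y0 M1 M0 delta z <= alpha) <= alpha.
Proof.
pose Y0E i := (Y0 i)%:E; pose y0E i := (y0 i)%:E.
pose s := (tie_perm Y0E * (tie_perm y0E)^-1)%g.
pose T A := t_stat mw phi A y0E.
have imputed_le z : t_stat mw phi z (Yg0 Y1 Y0 M1 M0 delta z) <= T (s @: z).
  rewrite /T -t_stat_relabel; apply: le_t_stat => // i.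
  - exact: Yg0_treated_le.
  - exact: Yg0_control_ge.
apply: le_trans (cre_prob_pvalue_le n1 T (ltW ha0)).
rewrite -[X in _ <= X](cre_prob_perm _ _ s).
apply: cre_prob_le => z _; apply: le_trans.
by apply: cre_prob_le => A _; exact: le_trans (imputed_le z).
Qed.
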